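(* For $\omega>0$ small and any $h$ in the Schwartz space $\mathcal{S}(\mathbb{R})$, \[ \int(2yh'+h)Kh=4\int(h'')^2+4\int(h')^2+\int Y_1(h')^2+\int Y_0h^2, \] where $Y_1=-2K_2-yK_2'+2yK_1$ and $Y_0=\tfrac12(K_2''-K_1'-2yK_0')$, and these satisfy $|\partial_y^kY_1|+|\partial_y^kY_0|\lesssim\omega e^{-|y|}$ on $\mathbb{R}$ for all $k\ge0$.
   Context: Let $Q_\omega(y)=\sqrt{4/(1+a_\omega\cosh 2y)}$, $a_\omega=\sqrt{1+\tfrac{16}{3}\omega}$, $M_+=-\partial_y^2+1+\tfrac{\omega}{3}Q_\omega^4$, $M_-=-\partial_y^2+1-\omega Q_\omega^4$. For small $\omega>0$, $\alpha=\alpha(\omega)>0$ is smooth with $\alpha=\tfrac89\omega+O(\omega^2)$, $\lambda=1-\alpha^2$, $\kappa=\sqrt{2-\alpha^2}$, and $W_1,W_2$ are smooth real functions, even in $y$, with $M_+W_1=\lambda W_2$, $M_-W_2=\lambda W_1$, and for $j=1,2$, $k\ge0$: $|\partial_y^kW_j|\lesssim\omega^ke^{-\alpha|y|}+\omega e^{-|y|}$, $|\partial_y^k(W_1-W_2)|\lesssim\omega e^{-\kappa|y|}$, $|W_j-e^{-\alpha|y|}|\lesssim\omega e^{-\alpha|y|}$. With $U=\partial_y-W_2'/W_2$, the operator $K=\partial_y^4-2\partial_y^2+K_2\partial_y^2+K_1\partial_y+K_0+1$ is the fourth-order differential operator (with smooth coefficients $K_2,K_1,K_0$ uniquely determined)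 satisfying $UM_+M_-=KU$; its coefficients satisfy $|\partial_y^kK_i|\lesssim\omega e^{-(\kappa-\alpha)|y|}$. $\lesssim$ means $\le C\,\cdot$ with $C$ independent of $\omega,y$. *)

From Stdlib Require Import Reals.
From Coquelicot Require Import Coquelicot.
Open Scope R_scope.

Definition smooth (f : R -> R) : Prop := forall (n : nat) (y : R), ex_derive_n f n y.

Definition schwartz (h : R -> R) : Prop :=
  smooth h /\ forall m n : nat, exists C : R, forall x : R, Rabs (x ^ m * Derive_n h n x) <= C.

Definition integrable_R (f : R -> R) : Prop :=
  ex_RInt_gen f (Rbar_locally m_infty) (Rbar_locally p_infty).
Definition integral_R (f : R -> R) : R :=
  RInt_gen f (Rbar_locally m_infty) (Rbar_locally p_infty).

Definition a_om (w : R) : R := sqrt (1 + 16 / 3 * w).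
Definition Q (w y : R) : R := sqrt (4 / (1 + a_om w * cosh (2 * y))).

Definition Mplus_op (w : R) (f : R -> R) (y : R) : R :=
  - Derive_n f 2 y + f y + w / 3 * Q w y ^ 4 * f y.
Definition Mminus_op (w : R) (f : R -> R) (y : R) : R :=
  - Derive_n f 2 y + f y - w * Q w y ^ 4 * f y.

Definition Uop (W2 : R -> R) (f : R -> R) (y : R) : R :=
  Derive f y - Derive W2 y / W2 y * f y.

Definition Kop (K2 K1 K0 : R -> R) (g : R -> R) (y : R) : R :=
  Derive_n g 4 y - 2 * Derive_n g 2 y + K2 y * Derive_n g 2 y
  + K1 y * Derive g y + K0 y * g y + g y.

Definition Y1 (K2 K1 : R -> R) (y : R) : R :=
  -2 * K2 y - y * Derive K2 y + 2 * y * K1 y.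
Definition Y0 (K2 K1 K0 : R -> R) (y : R) : R :=
  / 2 * (Derive_n K2 2 y - Derive K1 y - 2 * y * Derive K0 y).

From Stdlib Require Import Reals Lra.
From Coquelicot Require Import Coquelicot.
Open Scope R_scope.

(* The integrand (2yh' + h)Kh minus the right-hand side is the exact derivative of an
   explicit quadratic expression in h, h', h'', h''' with coefficients built from y, the K_i
   and K2'.  For h Schwartz and bounded K_i this boundary term decays like 1/(1 + y^2), so its
   derivative integrates to 0 over R, and every integrand is integrable by comparison with
   1/(1 + y^2).
   For the bounds on Y1 and Y0, the Leibniz rule writes their derivatives as combinations of
   the K_i^(j) and y K_i^(j).  Since alpha = O(omega), kappa - alpha >= 11/10 for small omega,
   so the weight e^{-(kappa - alpha)|y|} absorbs the factor y and leaves O(omega e^{-|y|}). *)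

(** * Bounded and quadratically decaying functions *)

Definition bounded_fun (f : R -> R) : Prop := exists C, forall y, Rabs (f y) <= C.

Definition quad_decay (f : R -> R) : Prop :=
  exists C, forall y, Rabs (f y) * (1 + y ^ 2) <= C.

Lemma bounded_fun_const (c : R) : bounded_fun (fun _ => c).
Proof. exists (Rabs c). intros _. apply Rle_refl. Qed.

Lemma bounded_fun_mult (f g : R -> R) :
  bounded_fun f -> bounded_fun g -> bounded_fun (fun y => f y * g y).
Proof.
  intros [A HA] [B HB]. exists (A * B). intros y. rewrite Rabs_mult.
  apply Rmult_le_compat; auto using Rabs_pos.
Qed.

Lemma quad_decay_bounded (f : R -> R) : quad_decay f -> bounded_fun f.
Proof.
  intros [C HC]. exists C. intros y. specialize (HC y).
  pose proof (Rabs_pos (f y)). pose proof (pow2_ge_0 y). nra.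
Qed.

Lemma quad_decay_mult (f g : R -> R) :
  bounded_fun f -> quad_decay g -> quad_decay (fun y => f y * g y).
Proof.
  intros [A HA] [B HB]. exists (A * B). intros y. rewrite Rabs_mult, Rmult_assoc.
  pose proof (pow2_ge_0 y). pose proof (Rabs_pos (g y)).
  apply Rmult_le_compat; auto using Rabs_pos. nra.
Qed.

Lemma quad_decay_plus (f g : R -> R) :
  quad_decay f -> quad_decay g -> quad_decay (fun y => f y + g y).
Proof.
  intros [A HA] [B HB]. exists (A + B). intros y. specialize (HA y). specialize (HB y).
  pose proof (Rabs_triang (f y) (g y)). pose proof (pow2_ge_0 y). nra.
Qed.

Lemma quad_decay_minus (f g : R -> R) :
  quad_decay f -> quad_decay g -> quad_decay (fun y => f y - g y).
Proof.
  intros Hf [B HB]. apply (quad_decay_plus f (fun y => - g y)); [exact Hf |].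
  exists B. intros y. now rewrite Rabs_Ropp.
Qed.

Lemma quad_decay_ext (f g : R -> R) : (forall y, f y = g y) -> quad_decay f -> quad_decay g.
Proof. intros E [C HC]. exists C. intros y. rewrite <- E. apply HC. Qed.

Lemma quad_decay_sq (f : R -> R) : quad_decay f -> quad_decay (fun y => f y ^ 2).
Proof.
  intros Hf. apply (quad_decay_ext (fun y => f y * f y)); [intros; ring |].
  apply quad_decay_mult; [apply quad_decay_bounded |]; exact Hf.
Qed.

Lemma quad_decay_bound_nonneg (f : R -> R) (C : R) :
  (forall y, Rabs (f y) * (1 + y ^ 2) <= C) -> 0 <= C.
Proof.
  intros Hf. specialize (Hf 0). pose proof (Rabs_pos (f 0)). simpl in Hf. nra.
Qed.

Lemma quad_decay_lim (f : R -> R) : quad_decay f ->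
  filterlim f (Rbar_locally p_infty) (locally 0) /\
  filterlim f (Rbar_locally m_infty) (locally 0).
Proof.
  intros [C Hd]. pose proof (quad_decay_bound_nonneg f C Hd) as HC.
  assert (Hsmall : forall eps : posreal, forall x, 1 + C / eps < Rabs x -> Rabs (f x - 0) < eps).
  { intros eps x Hx. pose proof (cond_pos eps). rewrite Rminus_0_r.
    assert (Hx2 : C < eps * x ^ 2).
    { assert (0 <= C / eps) by (apply Rdiv_le_0_compat; lra).
      assert (Hq : eps * (C / eps) = C) by (field; lra).
      assert (Rabs x * Rabs x > C / eps) by nra.
      rewrite <- pow2_abs. simpl. nra. }
    specialize (Hd x). pose proof (pow2_ge_0 x).
    destruct (Rlt_dec (Rabs (f x)) eps) as [Hlt | Hge]; [exact Hlt | nra]. }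
  split; apply filterlim_locally; intros eps;
    assert (0 <= C / eps) by (apply Rdiv_le_0_compat; [lra | apply cond_pos]).
  - exists (1 + C / eps). intros x Hx. apply Hsmall. rewrite Rabs_right; lra.
  - exists (- (1 + C / eps)). intros x Hx. apply Hsmall. rewrite Rabs_left; lra.
Qed.

(** * Integrals over R *)

Lemma atan_le_mono (a b : R) : a <= b -> atan a <= atan b.
Proof.
  intros Hab. destruct (Rle_lt_or_eq_dec a b Hab) as [Hlt | ->].
  - now apply Rlt_le, atan_increasing.
  - apply Rle_refl.
Qed.

(* [C / (1 + t^2)] is an integrable majorant whose primitive [C atan] has limits at both ends. *)
Lemma abs_RInt_le_atan (f : R -> R) (C a b : R) :
  (forall x, continuous f x) -> (forall y, Rabs (f y) * (1 + y ^ 2) <= C) ->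
  Rabs (RInt f a b) <= C * Rabs (atan b - atan a).
Proof.
  intros Hc Hd.
  assert (Hex : forall a b, ex_RInt f a b)
    by (intros; apply (ex_RInt_continuous (V := R_CompleteNormedModule)); auto).
  revert a b.
  assert (Hle : forall a b, a <= b -> Rabs (RInt f a b) <= C * Rabs (atan b - atan a)).
  { intros a b Hab.
    pose proof (atan_le_mono a b Hab).
    rewrite (Rabs_right (atan b - atan a)) by lra.
    apply (norm_RInt_le f (fun t => C / (1 + t ^ 2)) a b); auto.
    - intros t _. pose proof (pow2_ge_0 t). apply Rmult_le_reg_r with (1 + t ^ 2); [lra |].
      unfold Rdiv. rewrite Rmult_assoc, Rinv_l by lra. now rewrite Rmult_1_r.
    - apply (RInt_correct (V := R_CompleteNormedModule)), Hex.
    - replace (C * (atan b - atan a)) with (C * atan b - C * atan a) by ring.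
      apply (is_RInt_derive (fun t => C * atan t)).
      + intros t _. auto_derive; auto. simpl. field. pose proof (pow2_ge_0 t). nra.
      + intros t _. apply (ex_derive_continuous (fun t => C / (1 + t ^ 2))).
        auto_derive. pose proof (pow2_ge_0 t). lra. }
  intros a b. destruct (Rle_dec a b) as [Hab | Hba]; [now apply Hle |].
  rewrite <- opp_RInt_swap by apply Hex. unfold opp; simpl.
  rewrite Rabs_Ropp, Rabs_minus_sym. apply Hle. lra.
Qed.

Lemma atan_tails_close (eps : R) : 0 < eps ->
  exists M, forall a b, (M <= a /\ M <= b) \/ (a <= - M /\ b <= - M) ->
    Rabs (atan b - atan a) < eps.
Proof.
  intros Heps. pose proof PI_RGT_0.
  set (d := Rmin (eps / 2) (PI / 2)).
  assert (Hd : 0 < d <= eps / 2 /\ d <= PI / 2)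
    by (unfold d; repeat split; [apply Rmin_glb_lt; lra | apply Rmin_l | apply Rmin_r]).
  exists (tan (PI / 2 - d)).
  assert (HM : atan (tan (PI / 2 - d)) = PI / 2 - d) by (apply atan_tan; lra).
  intros a b Hab. pose proof (atan_bound a). pose proof (atan_bound b).
  destruct Hab as [[Ha Hb] | [Ha Hb]].
  - apply atan_le_mono in Ha, Hb. apply Rabs_def1; lra.
  - apply atan_le_mono in Ha, Hb. rewrite atan_opp in Ha, Hb. apply Rabs_def1; lra.
Qed.

Lemma ex_RInt_gen_quad_decay (f : R -> R) :
  (forall x, continuous f x) -> quad_decay f -> integrable_R f.
Proof.
  intros Hc [C Hd]. pose proof (quad_decay_bound_nonneg f C Hd) as HC.
  assert (Hex : forall a b, ex_RInt f a b)
    by (intros; apply (ex_RInt_continuous (V := R_CompleteNormedModule)); auto).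
  unfold integrable_R, ex_RInt_gen, is_RInt_gen.
  refine (proj1 (filterlimi_locally_cauchy
    (F := filter_prod (Rbar_locally m_infty) (Rbar_locally p_infty)) (U := R_CompleteSpace)
    (fun ab => is_RInt f (fst ab) (snd ab)) _) _).
  - apply filter_forall. intros [a b]. split.
    + apply Hex.
    + intros l1 l2 H1 H2.
      now rewrite <- (is_RInt_unique _ _ _ _ H1), <- (is_RInt_unique _ _ _ _ H2).
  - intros eps. pose proof (cond_pos eps) as Heps.
    destruct (atan_tails_close (eps / (2 * (C + 1)))) as [M HM].
    { apply Rdiv_lt_0_compat; lra. }
    assert (Htail : forall a b, (M <= a /\ M <= b) \/ (a <= - M /\ b <= - M) ->
              Rabs (RInt f a b) < eps / 2).
    { intros a b Hab. eapply Rle_lt_trans; [apply abs_RInt_le_atan; eauto |].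
      specialize (HM a b Hab).
      apply Rle_lt_trans with ((C + 1) * Rabs (atan b - atan a)).
      - pose proof (Rabs_pos (atan b - atan a)). nra.
      - replace (eps / 2) with ((C + 1) * (eps / (2 * (C + 1)))) by (field; lra).
        apply Rmult_lt_compat_l; lra. }
    exists (fun ab => fst ab < - M /\ M < snd ab). split.
    + exists (fun a => a < - M) (fun b => M < b); [now exists (- M) | now exists M | auto].
    + intros [a b] [a' b'] [Ha Hb] [Ha' Hb'] l l' Hl Hl'. simpl in *.
      rewrite <- (is_RInt_unique _ _ _ _ Hl), <- (is_RInt_unique _ _ _ _ Hl').
      change (Rabs (RInt f a' b' - RInt f a b) < eps).
      rewrite <- (RInt_Chasles f a' a b'), <- (RInt_Chasles f a b b') by apply Hex.
      change (Rabs (RInt f a' a + (RInt f a b + RInt f b b') - RInt f a b) < eps).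
      replace (RInt f a' a + (RInt f a b + RInt f b b') - RInt f a b)
        with (RInt f a' a + RInt f b b') by ring.
      pose proof (Htail a' a ltac:(lra)). pose proof (Htail b b' ltac:(lra)).
      eapply Rle_lt_trans; [apply Rabs_triang | lra].
Qed.

Lemma is_RInt_gen_quad_decay (f : R -> R) :
  (forall x, continuous f x) -> quad_decay f ->
  is_RInt_gen f (Rbar_locally m_infty) (Rbar_locally p_infty) (integral_R f).
Proof.
  intros Hc Hd.
  exact (RInt_gen_correct (V := R_CompleteNormedModule) f (ex_RInt_gen_quad_decay f Hc Hd)).
Qed.

Lemma is_RInt_gen_derive_quad_decay (F f : R -> R) :
  (forall x, is_derive F x (f x)) -> (forall x, continuous f x) -> quad_decay F ->
  is_RInt_gen f (Rbar_locally m_infty) (Rbar_locally p_infty) 0.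
Proof.
  intros HF Hc Hd. destruct (quad_decay_lim F Hd) as [Hp Hm].
  assert (HD : forall x, Derive F x = f x) by (intros; now apply is_derive_unique).
  replace 0 with (0 - 0) by ring.
  apply (is_RInt_gen_ext (Derive F)).
  - apply filter_forall. intros ab x _. apply HD.
  - apply is_RInt_gen_Derive; [| | exact Hm | exact Hp].
    + apply filter_forall. intros ab x _. eexists. apply HF.
    + apply filter_forall. intros ab x _.
      apply (continuous_ext f); [intros t; now rewrite HD | apply Hc].
Qed.

Lemma is_RInt_gen_Rplus {Fa Fb : (R -> Prop) -> Prop} {FFa : Filter Fa} {FFb : Filter Fb}
  (f g : R -> R) (a b : R) :
  is_RInt_gen f Fa Fb a -> is_RInt_gen g Fa Fb b -> is_RInt_gen (fun y => f y + g y) Fa Fb (a + b).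
Proof. exact (is_RInt_gen_plus (V := R_NormedModule) f g a b). Qed.

Lemma is_RInt_gen_Rmult_l {Fa Fb : (R -> Prop) -> Prop} {FFa : Filter Fa} {FFb : Filter Fb}
  (c : R) (f : R -> R) (a : R) :
  is_RInt_gen f Fa Fb a -> is_RInt_gen (fun y => c * f y) Fa Fb (c * a).
Proof. exact (is_RInt_gen_scal (V := R_NormedModule) f c a). Qed.

Lemma smooth_ex_derive (f : R -> R) (n : nat) (x : R) : smooth f -> ex_derive (Derive_n f n) x.
Proof. intros Hf. exact (Hf (S n) x). Qed.

Lemma Derive_Derive_n (f : R -> R) (n : nat) (x : R) :
  Derive (fun y => Derive_n f n y) x = Derive_n f (S n) x.
Proof. reflexivity. Qed.

Lemma schwartz_quad_decay (h : R -> R) (n : nat) : schwartz h -> quad_decay (Derive_n h n).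
Proof.
  intros [_ Hh]. destruct (Hh 0%nat n) as [A HA], (Hh 2%nat n) as [B HB].
  exists (A + B). intros y. specialize (HA y). specialize (HB y).
  rewrite pow_O, Rmult_1_l in HA. rewrite Rabs_mult, (Rabs_right (y ^ 2)) in HB
    by (apply Rle_ge, pow2_ge_0).
  nra.
Qed.

Lemma schwartz_bounded_mul_id (h : R -> R) (n : nat) :
  schwartz h -> bounded_fun (fun y => y * Derive_n h n y).
Proof.
  intros [_ Hh]. destruct (Hh 1%nat n) as [C HC]. exists C. intros y.
  specialize (HC y). now rewrite pow_1 in HC.
Qed.

(* [auto_derive] must treat [Derive_n h k] as an opaque function instead of unfolding it. *)
#[local] Arguments Derive_n f n x : simpl never.

Ltac solve_ex_derive_smooth :=
  match goal with
  | |- ex_derive (fun x => Derive_n ?f ?n x) ?y => exact (smooth_ex_derive f n y ltac:(assumption))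
  | |- ex_derive (fun x => Derive ?f x) ?y => exact (smooth_ex_derive f 1 y ltac:(assumption))
  | |- ex_derive (fun x => ?f x) ?y => exact (smooth_ex_derive f 0 y ltac:(assumption))
  end.

Ltac continuous_smooth :=
  apply (ex_derive_continuous (V := R_NormedModule)); auto_derive;
  repeat split; solve_ex_derive_smooth.

(** * The virial identity *)

Ltac prove_quad_decay :=
  repeat match goal with
  | |- quad_decay (fun y => _ - _) => apply quad_decay_minus
  | |- quad_decay (fun y => _ + _) => apply quad_decay_plus
  | |- quad_decay (fun y => _ * _) => apply quad_decay_mult
  | |- bounded_fun (fun y => _ * _) => first [assumption | apply bounded_fun_mult]
  | |- bounded_fun _ =>
      first [assumption | apply bounded_fun_const | apply quad_decay_bounded; assumption]
  | |- quad_decay _ => assumption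
  end.

(* The boundary term of the integrations by parts of (2yh' + h)Kh; each summand is grouped
   as (bounded factor) * (decaying factor), the shape [prove_quad_decay] works on. *)
Definition virial_flux (K2 K1 K0 h : R -> R) (y : R) : R :=
  h y * Derive_n h 3 y - 3 * Derive h y * Derive_n h 2 y
  + 2 * (y * Derive h y) * Derive_n h 3 y - y * Derive_n h 2 y * Derive_n h 2 y
  - 2 * h y * Derive h y - 2 * (y * Derive h y) * Derive h y + y * h y * h y
  + K2 y * h y * Derive h y - / 2 * Derive K2 y * h y * h y
  + K2 y * (y * Derive h y) * Derive h y
  + / 2 * K1 y * h y * h y + K0 y * (y * h y) * h y.

Section VirialIdentity.

Variables K2 K1 K0 h : R -> R.

Hypotheses (K2_smooth : smooth K2) (K1_smooth : smooth K1) (K0_smooth : smooth K0).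

Hypothesis h_schwartz : schwartz h.

(* Found by [assumption] inside [solve_ex_derive_smooth]. *)
Let h_smooth : smooth h := proj1 h_schwartz.

Let virial_rhs (y : R) : R :=
  4 * Derive_n h 2 y ^ 2 + 4 * Derive h y ^ 2
  + Y1 K2 K1 y * Derive h y ^ 2 + Y0 K2 K1 K0 y * h y ^ 2.

Lemma is_derive_virial_flux (y : R) :
  is_derive (virial_flux K2 K1 K0 h) y
    ((2 * y * Derive h y + h y) * Kop K2 K1 K0 h y - virial_rhs y).
Proof.
  unfold virial_flux, virial_rhs, Kop, Y1, Y0.
  auto_derive; [repeat split; solve_ex_derive_smooth |].
  rewrite !Derive_Derive_n.
  change (Derive (fun x => Derive h x) y) with (Derive_n h 2 y).
  change (Derive (fun x => Derive K2 x) y) with (Derive_n K2 2 y).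
  change (fun x => h x) with h. change (fun x => K2 x) with K2.
  change (fun x => K1 x) with K1. change (fun x => K0 x) with K0.
  field.
Qed.

Hypotheses (K2_bounded : bounded_fun K2) (DK2_bounded : bounded_fun (Derive K2))
  (K1_bounded : bounded_fun K1) (K0_bounded : bounded_fun K0)
  (Y1_bounded : bounded_fun (Y1 K2 K1)) (Y0_bounded : bounded_fun (Y0 K2 K1 K0)).

Lemma quad_decay_virial_flux : quad_decay (virial_flux K2 K1 K0 h).
Proof.
  assert (quad_decay h) by exact (schwartz_quad_decay h 0 h_schwartz).
  assert (quad_decay (Derive h)) by exact (schwartz_quad_decay h 1 h_schwartz).
  assert (quad_decay (Derive_n h 2)) by exact (schwartz_quad_decay h 2 h_schwartz).
  assert (quad_decay (Derive_n h 3)) by exact (schwartz_quad_decay h 3 h_schwartz).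
  assert (bounded_fun (fun y => y * h y)) by exact (schwartz_bounded_mul_id h 0 h_schwartz).
  assert (bounded_fun (fun y => y * Derive h y)) by exact (schwartz_bounded_mul_id h 1 h_schwartz).
  assert (bounded_fun (fun y => y * Derive_n h 2 y))
    by exact (schwartz_bounded_mul_id h 2 h_schwartz).
  unfold virial_flux. prove_quad_decay.
Qed.

Lemma is_RInt_gen_virial_defect :
  is_RInt_gen (fun y => (2 * y * Derive h y + h y) * Kop K2 K1 K0 h y - virial_rhs y)
    (Rbar_locally m_infty) (Rbar_locally p_infty) 0.
Proof.
  apply (is_RInt_gen_derive_quad_decay (virial_flux K2 K1 K0 h)).
  - apply is_derive_virial_flux.
  - intros x. unfold virial_rhs, Kop, Y1, Y0. continuous_smooth.
  - exact quad_decay_virial_flux.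
Qed.

Lemma virial_identity :
  let lhs := fun y => (2 * y * Derive h y + h y) * Kop K2 K1 K0 h y in
  let i2 := fun y => (Derive_n h 2 y) ^ 2 in
  let i1 := fun y => (Derive h y) ^ 2 in
  let iY1 := fun y => Y1 K2 K1 y * (Derive h y) ^ 2 in
  let iY0 := fun y => Y0 K2 K1 K0 y * (h y) ^ 2 in
  integrable_R lhs /\ integrable_R i2 /\ integrable_R i1 /\
  integrable_R iY1 /\ integrable_R iY0 /\
  integral_R lhs = 4 * integral_R i2 + 4 * integral_R i1 + integral_R iY1 + integral_R iY0.
Proof.
  intros lhs i2 i1 iY1 iY0.
  assert (Dh0 : quad_decay (fun y => h y ^ 2))
    by exact (quad_decay_sq _ (schwartz_quad_decay h 0 h_schwartz)).
  assert (Dh1 : quad_decay (fun y => Derive h y ^ 2))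
    by exact (quad_decay_sq _ (schwartz_quad_decay h 1 h_schwartz)).
  assert (I2 : is_RInt_gen i2 (Rbar_locally m_infty) (Rbar_locally p_infty) (integral_R i2)).
  { apply is_RInt_gen_quad_decay; [intros x; unfold i2; continuous_smooth |].
    exact (quad_decay_sq _ (schwartz_quad_decay h 2 h_schwartz)). }
  assert (I1 : is_RInt_gen i1 (Rbar_locally m_infty) (Rbar_locally p_infty) (integral_R i1)).
  { apply is_RInt_gen_quad_decay; [intros x; unfold i1; continuous_smooth | exact Dh1]. }
  assert (IY1 : is_RInt_gen iY1 (Rbar_locally m_infty) (Rbar_locally p_infty) (integral_R iY1)).
  { apply is_RInt_gen_quad_decay; [intros x; unfold iY1, Y1; continuous_smooth |].
    apply quad_decay_mult; assumption. }
  assert (IY0 : is_RInt_gen iY0 (Rbar_locally m_infty) (Rbar_locally p_infty) (integral_R iY0)).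
  { apply is_RInt_gen_quad_decay; [intros x; unfold iY0, Y0; continuous_smooth |].
    apply quad_decay_mult; assumption. }
  assert (Ilhs : is_RInt_gen lhs (Rbar_locally m_infty) (Rbar_locally p_infty)
    (4 * integral_R i2 + 4 * integral_R i1 + integral_R iY1 + integral_R iY0 + 0)).
  { apply (is_RInt_gen_ext (fun y => (4 * i2 y + 4 * i1 y + iY1 y + iY0 y)
                                     + (lhs y - virial_rhs y))).
    - apply filter_forall. intros ab y _.
      assert (E : 4 * i2 y + 4 * i1 y + iY1 y + iY0 y + (lhs y - virial_rhs y) = lhs y)
        by (unfold i2, i1, iY1, iY0, virial_rhs; ring).
      exact E.
    - apply is_RInt_gen_Rplus; [| exact is_RInt_gen_virial_defect].
      exact (is_RInt_gen_Rplus _ _ _ _ (is_RInt_gen_Rplus _ _ _ _ (is_RInt_gen_Rplus _ _ _ _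
               (is_RInt_gen_Rmult_l 4 _ _ I2) (is_RInt_gen_Rmult_l 4 _ _ I1)) IY1) IY0). }
  rewrite Rplus_0_r in Ilhs.
  repeat split; try (eexists; eassumption).
  now apply is_RInt_gen_unique.
Qed.

End VirialIdentity.

(** * Decay of Y1 and Y0 *)

Lemma Derive_n_Y1 (K2 K1 : R -> R) (k : nat) (y : R) :
  smooth K2 -> smooth K1 ->
  Derive_n (Y1 K2 K1) k y =
  -2 * Derive_n K2 k y - (y * Derive_n K2 (S k) y + INR k * Derive_n K2 k y)
  + 2 * (y * Derive_n K1 k y + INR k * Derive_n K1 (pred k) y).
Proof.
  intros S2 S1. revert y. induction k as [| k IH]; intros y.
  - change (Y1 K2 K1 y = -2 * K2 y - (y * Derive K2 y + 0 * K2 y) + 2 * (y * K1 y + 0 * K1 y)).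
    unfold Y1. ring.
  - rewrite <- Derive_Derive_n.
    erewrite Derive_ext by apply IH. apply is_derive_unique.
    auto_derive; [repeat split; solve_ex_derive_smooth |].
    rewrite !Derive_Derive_n, S_INR. destruct k; simpl pred; simpl INR; ring.
Qed.

Lemma Derive_n_Y0 (K2 K1 K0 : R -> R) (k : nat) (y : R) :
  smooth K2 -> smooth K1 -> smooth K0 ->
  Derive_n (Y0 K2 K1 K0) k y =
  / 2 * (Derive_n K2 (S (S k)) y - Derive_n K1 (S k) y
         - 2 * (y * Derive_n K0 (S k) y + INR k * Derive_n K0 k y)).
Proof.
  intros S2 S1 S0. revert y. induction k as [| k IH]; intros y.
  - change (Y0 K2 K1 K0 y =
            / 2 * (Derive_n K2 2 y - Derive K1 y - 2 * (y * Derive K0 y + 0 * K0 y))).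
    unfold Y0. ring.
  - rewrite <- Derive_Derive_n.
    erewrite Derive_ext by apply IH. apply is_derive_unique.
    auto_derive; [repeat split; solve_ex_derive_smooth |].
    rewrite !Derive_Derive_n, S_INR. ring.
Qed.

Lemma exp_le_mono (a b : R) : a <= b -> exp a <= exp b.
Proof.
  intros Hab. destruct (Rle_lt_or_eq_dec a b Hab) as [Hlt | ->].
  - now apply Rlt_le, exp_increasing.
  - apply Rle_refl.
Qed.

Lemma abs_mul_exp_le (d y : R) : 0 < d -> Rabs y * exp (- (d * Rabs y)) <= / d.
Proof.
  intros Hd. pose proof (exp_ineq1_le (d * Rabs y)). pose proof (exp_pos (d * Rabs y)).
  pose proof (Rabs_pos y).
  rewrite exp_Ropp. apply Rmult_le_reg_l with (d * exp (d * Rabs y)); [nra |].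
  field_simplify; [nra | lra | lra].
Qed.

Definition bigO_w_exp (omega0 : R) (g : R -> R -> R) : Prop :=
  exists C, forall w y, 0 < w < omega0 -> Rabs (g w y) <= C * w * exp (- Rabs y).

Section BigOWExp.

Variable omega0 : R.

Lemma bigO_w_exp_plus (f g : R -> R -> R) :
  bigO_w_exp omega0 f -> bigO_w_exp omega0 g -> bigO_w_exp omega0 (fun w y => f w y + g w y).
Proof.
  intros [A HA] [B HB]. exists (A + B). intros w y Hw.
  specialize (HA w y Hw). specialize (HB w y Hw).
  pose proof (Rabs_triang (f w y) (g w y)). lra.
Qed.

Lemma bigO_w_exp_scal (a : R) (f : R -> R -> R) :
  bigO_w_exp omega0 f -> bigO_w_exp omega0 (fun w y => a * f w y).
Proof.
  intros [A HA]. exists (Rabs a * A). intros w y Hw. rewrite Rabs_mult, !Rmult_assoc.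
  apply Rmult_le_compat_l; [apply Rabs_pos |]. rewrite <- Rmult_assoc. apply HA, Hw.
Qed.

Lemma bigO_w_exp_minus (f g : R -> R -> R) :
  bigO_w_exp omega0 f -> bigO_w_exp omega0 g -> bigO_w_exp omega0 (fun w y => f w y - g w y).
Proof.
  intros Hf Hg. destruct (bigO_w_exp_plus f (fun w y => -1 * g w y) Hf (bigO_w_exp_scal (-1) g Hg))
    as [C HC].
  exists C. intros w y Hw. replace (f w y - g w y) with (f w y + -1 * g w y) by ring. auto.
Qed.

Lemma bigO_w_exp_ext (f g : R -> R -> R) :
  (forall w y, 0 < w < omega0 -> f w y = g w y) -> bigO_w_exp omega0 f -> bigO_w_exp omega0 g.
Proof. intros E [C HC]. exists C. intros w y Hw. rewrite <- E by exact Hw. auto. Qed.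

Lemma bigO_w_exp_bounded (g : R -> R -> R) (w : R) :
  bigO_w_exp omega0 g -> 0 < w < omega0 -> bounded_fun (g w).
Proof.
  intros [C HC] Hw. exists (Rabs C * w). intros y. specialize (HC w y Hw).
  assert (He : exp (- Rabs y) <= 1)
    by (rewrite <- exp_0; apply exp_le_mono; pose proof (Rabs_pos y); lra).
  pose proof (exp_pos (- Rabs y)). pose proof (Rle_abs C). pose proof (Rabs_pos C).
  assert (0 <= (Rabs C - C) * (w * exp (- Rabs y))) by (apply Rmult_le_pos; nra).
  assert (0 <= Rabs C * w * (1 - exp (- Rabs y))) by (apply Rmult_le_pos; nra).
  nra.
Qed.

End BigOWExp.

(* A rate [c >= 11/10] leaves [e^{-|y|/10}] to absorb the factor [y]. *)
Lemma bigO_w_exp_of_rate (omega0 : R) (c : R -> R) (g : R -> R -> R) :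
  (forall w, 0 < w < omega0 -> 11 / 10 <= c w) ->
  (exists C, forall w y, 0 < w < omega0 -> Rabs (g w y) <= C * w * exp (- c w * Rabs y)) ->
  bigO_w_exp omega0 g /\ bigO_w_exp omega0 (fun w y => y * g w y).
Proof.
  intros Hc [C HC].
  assert (Hsplit : forall w y, 0 < w < omega0 ->
    exp (- c w * Rabs y) = exp (- Rabs y) * exp (- ((c w - 1) * Rabs y))).
  { intros w y Hw. rewrite <- exp_plus. f_equal. ring. }
  assert (Hfactor : forall w y, 0 < w < omega0 ->
    0 <= C /\ exp (- ((c w - 1) * Rabs y)) <= 1 /\
    Rabs y * exp (- ((c w - 1) * Rabs y)) <= 10).
  { intros w y Hw. pose proof (Rabs_pos y). pose proof (Hc w Hw).
    assert (Hmono : exp (- ((c w - 1) * Rabs y)) <= exp (- (/ 10 * Rabs y)))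
      by (apply exp_le_mono; nra).
    repeat split.
    - specialize (HC w y Hw). pose proof (Rabs_pos (g w y)).
      assert (0 < w * exp (- c w * Rabs y)) by (apply Rmult_lt_0_compat; [lra | apply exp_pos]).
      destruct (Rle_or_lt 0 C); [assumption | nra].
    - rewrite <- exp_0 at 2. apply exp_le_mono.
      assert (0 <= (c w - 1) * Rabs y) by (apply Rmult_le_pos; lra). lra.
    - replace 10 with (/ / 10) by field.
      eapply Rle_trans; [| apply abs_mul_exp_le; lra]. apply Rmult_le_compat_l; lra. }
  split.
  - exists C. intros w y Hw. destruct (Hfactor w y Hw) as (HC0 & Hle1 & _).
    eapply Rle_trans; [apply HC, Hw |]. rewrite Hsplit by exact Hw.
    pose proof (exp_pos (- Rabs y)).
    apply Rmult_le_compat_l; [apply Rmult_le_pos; lra |].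
    rewrite <- (Rmult_1_r (exp (- Rabs y))) at 2. apply Rmult_le_compat_l; lra.
  - exists (10 * C). intros w y Hw. destruct (Hfactor w y Hw) as (HC0 & _ & Hle10).
    rewrite Rabs_mult. eapply Rle_trans.
    { apply Rmult_le_compat_l; [apply Rabs_pos | apply HC, Hw]. }
    rewrite Hsplit by exact Hw. pose proof (exp_pos (- Rabs y)).
    replace (Rabs y * (C * w * (exp (- Rabs y) * exp (- ((c w - 1) * Rabs y)))))
      with (C * w * exp (- Rabs y) * (Rabs y * exp (- ((c w - 1) * Rabs y)))) by ring.
    replace (10 * C * w * exp (- Rabs y)) with (C * w * exp (- Rabs y) * 10) by ring.
    apply Rmult_le_compat_l; [| exact Hle10].
    apply Rmult_le_pos; [apply Rmult_le_pos |]; lra.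
Qed.

Ltac prove_bigO_w_exp :=
  repeat match goal with
  | |- bigO_w_exp _ _ => assumption
  | |- bigO_w_exp _ (fun w y => _ - _) => apply bigO_w_exp_minus
  | |- bigO_w_exp _ (fun w y => _ + _) => apply bigO_w_exp_plus
  | |- bigO_w_exp _ (fun w y => _ * _) => apply bigO_w_exp_scal
  end.

Section CoefficientBounds.

Variables (omega1 omega0 : R) (c : R -> R) (K2 K1 K0 : R -> R -> R).

Hypothesis omega0_le : omega0 <= omega1.

Hypothesis K_smooth : forall w, 0 < w < omega1 -> smooth (K2 w) /\ smooth (K1 w) /\ smooth (K0 w).

Hypothesis rate_ge : forall w, 0 < w < omega0 -> 11 / 10 <= c w.

Hypothesis K_decay : forall k, exists C, forall w y, 0 < w < omega1 ->
  Rabs (Derive_n (K2 w) k y) <= C * w * exp (- c w * Rabs y) /\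
  Rabs (Derive_n (K1 w) k y) <= C * w * exp (- c w * Rabs y) /\
  Rabs (Derive_n (K0 w) k y) <= C * w * exp (- c w * Rabs y).

Let omega0_sub (w : R) : 0 < w < omega0 -> 0 < w < omega1.
Proof. lra. Qed.

Lemma bigO_w_exp_Derive_n_K (k : nat) :
  (bigO_w_exp omega0 (fun w => Derive_n (K2 w) k) /\
   bigO_w_exp omega0 (fun w y => y * Derive_n (K2 w) k y)) /\
  (bigO_w_exp omega0 (fun w => Derive_n (K1 w) k) /\
   bigO_w_exp omega0 (fun w y => y * Derive_n (K1 w) k y)) /\
  (bigO_w_exp omega0 (fun w => Derive_n (K0 w) k) /\
   bigO_w_exp omega0 (fun w y => y * Derive_n (K0 w) k y)).
Proof.
  destruct (K_decay k) as [C HC].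
  split; [| split]; apply bigO_w_exp_of_rate with c; auto; exists C; intros w y Hw;
    apply HC, omega0_sub, Hw.
Qed.

Lemma bigO_w_exp_Derive_n_Y (k : nat) :
  bigO_w_exp omega0 (fun w => Derive_n (Y1 (K2 w) (K1 w)) k) /\
  bigO_w_exp omega0 (fun w => Derive_n (Y0 (K2 w) (K1 w) (K0 w)) k).
Proof.
  destruct (bigO_w_exp_Derive_n_K k) as ((K2k & yK2k) & (K1k & yK1k) & (K0k & yK0k)).
  destruct (bigO_w_exp_Derive_n_K (S k)) as ((K2k1 & yK2k1) & (K1k1 & _) & (K0k1 & yK0k1)).
  destruct (bigO_w_exp_Derive_n_K (pred k)) as (_ & (K1pk & _) & _).
  destruct (bigO_w_exp_Derive_n_K (S (S k))) as ((K2k2 & _) & _).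
  split.
  - eapply bigO_w_exp_ext.
    { intros w y Hw. destruct (K_smooth w (omega0_sub w Hw)) as (S2 & S1 & _).
      symmetry. apply Derive_n_Y1; assumption. }
    prove_bigO_w_exp.
  - eapply bigO_w_exp_ext.
    { intros w y Hw. destruct (K_smooth w (omega0_sub w Hw)) as (S2 & S1 & S0).
      symmetry. apply Derive_n_Y0; assumption. }
    prove_bigO_w_exp.
Qed.

Lemma Y_derivatives_decay (k : nat) :
  exists C, forall w y, 0 < w < omega0 ->
    Rabs (Derive_n (Y1 (K2 w) (K1 w)) k y) + Rabs (Derive_n (Y0 (K2 w) (K1 w) (K0 w)) k y)
      <= C * w * exp (- Rabs y).
Proof.
  destruct (bigO_w_exp_Derive_n_Y k) as [[A HA] [B HB]].
  exists (A + B). intros w y Hw. specialize (HA w y Hw). specialize (HB w y Hw). lra.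
Qed.

Lemma coefficients_bounded (w : R) : 0 < w < omega0 ->
  bounded_fun (K2 w) /\ bounded_fun (Derive (K2 w)) /\ bounded_fun (K1 w) /\
  bounded_fun (K0 w) /\ bounded_fun (Y1 (K2 w) (K1 w)) /\ bounded_fun (Y0 (K2 w) (K1 w) (K0 w)).
Proof.
  intros Hw.
  destruct (bigO_w_exp_Derive_n_K 0) as ((K2b & _) & (K1b & _) & (K0b & _)).
  destruct (bigO_w_exp_Derive_n_K 1) as ((DK2b & _) & _).
  destruct (bigO_w_exp_Derive_n_Y 0) as [Y1b Y0b].
  repeat split.
  - exact (bigO_w_exp_bounded _ _ w K2b Hw).
  - exact (bigO_w_exp_bounded _ _ w DK2b Hw).
  - exact (bigO_w_exp_bounded _ _ w K1b Hw).
  - exact (bigO_w_exp_bounded _ _ w K0b Hw).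
  - exact (bigO_w_exp_bounded _ _ w Y1b Hw).
  - exact (bigO_w_exp_bounded _ _ w Y0b Hw).
Qed.

End CoefficientBounds.

Lemma alpha_le_quarter (a w C : R) :
  0 < w -> w < / (8 * (Rabs C + 1)) -> Rabs (a - 8 / 9 * w) <= C * w ^ 2 -> a <= 1 / 4.
Proof.
  intros Hw Hsmall Ha. pose proof (Rabs_pos C). pose proof (Rle_abs C).
  assert (HwC : 8 * (Rabs C + 1) * w < 1).
  { apply Rmult_lt_compat_l with (r := 8 * (Rabs C + 1)) in Hsmall; [| lra].
    rewrite Rinv_r in Hsmall by lra. lra. }
  apply Rabs_le_between in Ha. simpl in Ha. nra.
Qed.

Lemma kappa_sub_alpha_ge (a : R) : 0 < a <= 1 / 4 -> 11 / 10 <= sqrt (2 - a ^ 2) - a.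
Proof.
  intros Ha.
  assert (27 / 20 <= sqrt (2 - a ^ 2)).
  { rewrite <- (sqrt_square (27 / 20)) by lra. apply sqrt_le_1_alt. simpl. nra. }
  lra.
Qed.

Theorem lemma4 (omega1 : R) (alpha : R -> R) (W1 W2 K2 K1 K0 : R -> R -> R) :
  0 < omega1 ->
  (* alpha(omega) > 0, smooth, alpha = 8/9 omega + O(omega^2) *)
  (forall w : R, 0 < w < omega1 -> 0 < alpha w) ->
  (forall (n : nat) (w : R), 0 < w < omega1 -> ex_derive_n alpha n w) ->
  (exists C : R, forall w : R, 0 < w < omega1 -> Rabs (alpha w - 8 / 9 * w) <= C * w ^ 2) ->
  (* W1, W2 smooth, real, even *)
  (forall w : R, 0 < w < omega1 -> smooth (W1 w) /\ smooth (W2 w)) ->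
  (forall w y : R, 0 < w < omega1 -> W1 w (- y) = W1 w y /\ W2 w (- y) = W2 w y) ->
  (* M+ W1 = lambda W2, M- W2 = lambda W1, lambda = 1 - alpha^2 *)
  (forall w y : R, 0 < w < omega1 ->
     Mplus_op w (W1 w) y = (1 - alpha w ^ 2) * W2 w y /\
     Mminus_op w (W2 w) y = (1 - alpha w ^ 2) * W1 w y) ->
  (* derivative bounds on W1, W2 *)
  (forall k : nat, exists C : R, forall w y : R, 0 < w < omega1 ->
     Rabs (Derive_n (W1 w) k y) <= C * (w ^ k * exp (- alpha w * Rabs y) + w * exp (- Rabs y)) /\
     Rabs (Derive_n (W2 w) k y) <= C * (w ^ k * exp (- alpha w * Rabs y) + w * exp (- Rabs y))) ->
  (forall k : nat, exists C : R, forall w y : R, 0 < w < omega1 ->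
     Rabs (Derive_n (fun z => W1 w z - W2 w z) k y)
       <= C * w * exp (- sqrt (2 - alpha w ^ 2) * Rabs y)) ->
  (exists C : R, forall w y : R, 0 < w < omega1 ->
     Rabs (W1 w y - exp (- alpha w * Rabs y)) <= C * w * exp (- alpha w * Rabs y) /\
     Rabs (W2 w y - exp (- alpha w * Rabs y)) <= C * w * exp (- alpha w * Rabs y)) ->
  (* K2, K1, K0 smooth, with U M+ M- = K U *)
  (forall w : R, 0 < w < omega1 -> smooth (K2 w) /\ smooth (K1 w) /\ smooth (K0 w)) ->
  (forall w : R, 0 < w < omega1 -> forall f : R -> R, smooth f -> forall y : R,
     Uop (W2 w) (Mplus_op w (Mminus_op w f)) y = Kop (K2 w) (K1 w) (K0 w) (Uop (W2 w) f) y) ->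
  (* coefficient bounds |d^k K_i| <~ omega e^{-(kappa - alpha)|y|} *)
  (forall k : nat, exists C : R, forall w y : R, 0 < w < omega1 ->
     Rabs (Derive_n (K2 w) k y) <= C * w * exp (- (sqrt (2 - alpha w ^ 2) - alpha w) * Rabs y) /\
     Rabs (Derive_n (K1 w) k y) <= C * w * exp (- (sqrt (2 - alpha w ^ 2) - alpha w) * Rabs y) /\
     Rabs (Derive_n (K0 w) k y) <= C * w * exp (- (sqrt (2 - alpha w ^ 2) - alpha w) * Rabs y)) ->
  exists omega0 : R, 0 < omega0 <= omega1 /\
    (forall w : R, 0 < w < omega0 -> forall h : R -> R, schwartz h ->
       let lhs := fun y => (2 * y * Derive h y + h y) * Kop (K2 w) (K1 w) (K0 w) h y in
       let i2 := fun y => (Derive_n h 2 y) ^ 2 in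
       let i1 := fun y => (Derive h y) ^ 2 in
       let iY1 := fun y => Y1 (K2 w) (K1 w) y * (Derive h y) ^ 2 in
       let iY0 := fun y => Y0 (K2 w) (K1 w) (K0 w) y * (h y) ^ 2 in
       integrable_R lhs /\ integrable_R i2 /\ integrable_R i1 /\
       integrable_R iY1 /\ integrable_R iY0 /\
       integral_R lhs = 4 * integral_R i2 + 4 * integral_R i1 + integral_R iY1 + integral_R iY0) /\
    (forall k : nat, exists C : R, forall w y : R, 0 < w < omega0 ->
       Rabs (Derive_n (Y1 (K2 w) (K1 w)) k y) + Rabs (Derive_n (Y0 (K2 w) (K1 w) (K0 w)) k y)
         <= C * w * exp (- Rabs y)).
Proof.
  intros omega1_pos alpha_pos _ [Ca HCa] _ _ _ _ _ _ K_smooth _ K_decay.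
  (* On (0, omega0), alpha <= 1/4, hence kappa - alpha >= 11/10. *)
  set (omega0 := Rmin omega1 (/ (8 * (Rabs Ca + 1)))).
  assert (Homega0 : 0 < omega0 <= omega1).
  { split; [| apply Rmin_l]. apply Rmin_glb_lt; [lra |].
    apply Rinv_0_lt_compat. pose proof (Rabs_pos Ca). lra. }
  assert (Hrate : forall w, 0 < w < omega0 -> 11 / 10 <= sqrt (2 - alpha w ^ 2) - alpha w).
  { intros w Hw. assert (Hw1 : 0 < w < omega1) by lra.
    apply kappa_sub_alpha_ge. split; [now apply alpha_pos |].
    apply (alpha_le_quarter _ w Ca); [lra | | now apply HCa].
    eapply Rlt_le_trans; [apply Hw | apply Rmin_r]. }
  exists omega0. split; [exact Homega0 |]. split.
  - intros w Hw h Hh.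
    destruct (K_smooth w) as (S2 & S1 & S0); [lra |].
    destruct (coefficients_bounded omega1 omega0 _ K2 K1 K0 (proj2 Homega0) K_smooth Hrate
                K_decay w Hw) as (b2 & db2 & b1 & b0 & bY1 & bY0).
    exact (virial_identity (K2 w) (K1 w) (K0 w) h S2 S1 S0 Hh b2 db2 b1 b0 bY1 bY0).
  - exact (Y_derivatives_decay omega1 omega0 _ K2 K1 K0 (proj2 Homega0) K_smooth Hrate K_decay).
Qed.
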